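(* Let $T$ be an $\mathcal O$-operator on a Lie algebra $\mathfrak g$ with respect to a representation $(V;\rho)$ and let $T_t=\sum_{i=0}^n\tau_it^i$ be an order $n$ deformation of $T$. Then $T_t$ is extendable if and only if the obstruction class $[\mathrm{Ob}]\in\mathcal H^2(V,\mathfrak g)$ is trivial, where $\mathrm{Ob}(u,v)=\sum_{i+j=n+1,\ i,j\ge1}\big([\tau_i(u),\tau_j(v)]-\tau_i(\rho(\tau_j(u))(v)-\rho(\tau_j(v))(u))\big)$.
   Context: An $\mathcal O$-operator: linear $T:V\to\mathfrak g$ with $[Tu,Tv]=T(\rho(Tu)(v)-\rho(Tv)(u))$. An order $n$ deformation of $T$ is $T_t=\sum_{i=0}^n\tau_it^i$ with $\tau_0=T$, $\tau_i\in\mathrm{Hom}(V,\mathfrak g)$, such that $\sum_{k+l=i,\,k,l\ge0}([\tau_ku,\tau_lv]-\tau_k(\rho(\tau_lu)(v)-\rho(\tau_lv)(u)))=0$ for all $u,v\in V$ and $0\le i\le n$ (i.e. the $\mathcal O$-operator identity holds modulo $t^{n+1}$). It is extendable if there is $\tau_{n+1}\in\mathrm{Hom}(V,\mathfrak g)$ such that $T_t+\tau_{n+1}t^{n+1}$ is an order $n+1$ deformation. $\mathrm{Ob}$ is a $2$-cocycle. $\mathcal H^k(V,\mathfrak g)$ is the Chevalley–Eilenberg cohomology of the Lie algebra $(V,[\cdot,\cdot]_T)$, $[u,v]_T=\rho(Tu)(v)-\rho(Tv)(u)$, with coefficients in the representation $\bar\rho(u)(x)=[Tu,x]+T\rho(x)(u)$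 on $\mathfrak g$; its coboundary is $d_{\bar\rho}f(u_1,\dots,u_{k+1})=\sum_{i}(-1)^{i+1}[Tu_i,f(\dots,\hat u_i,\dots)]+\sum_i(-1)^{i+1}T\rho(f(\dots,\hat u_i,\dots))(u_i)+\sum_{i<j}(-1)^{i+j}f([u_i,u_j]_T,u_1,\dots,\hat u_i,\dots,\hat u_j,\dots,u_{k+1})$. *)

From HB Require Import structures.
From mathcomp Require Import all_boot all_order all_algebra.
Set Implicit Arguments. Unset Strict Implicit. Unset Printing Implicit Defensive.
Import GRing.Theory.
Local Open Scope ring_scope.

Section OOps.
Variables (K : fieldType) (g V : lmodType K).

Definition is_lie_bracket (br : g -> g -> g) : Prop :=
  [/\ (forall (a : K) x y z, br (a *: x + y) z = a *: br x z + br y z),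
      (forall (a : K) x y z, br z (a *: x + y) = a *: br z x + br z y),
      (forall x, br x x = 0)
    & (forall x y z, br x (br y z) + br y (br z x) + br z (br x y) = 0)].

Definition is_representation (br : g -> g -> g) (rho : g -> V -> V) : Prop :=
  [/\ (forall (a : K) x y u, rho (a *: x + y) u = a *: rho x u + rho y u),
      (forall (a : K) x u w, rho x (a *: u + w) = a *: rho x u + rho x w)
    & (forall x y u, rho (br x y) u = rho x (rho y u) - rho y (rho x u))].

Definition is_O_operator (br : g -> g -> g) (rho : g -> V -> V)
    (T : {linear V -> g}) : Prop :=
  forall u v, br (T u) (T v) = T (rho (T u) v - rho (T v) u).

Definition is_order_deformation (br : g -> g -> g) (rho : g -> V -> V)
    (T : {linear V -> g}) (n : nat) (tau : nat -> {linear V -> g}) : Prop :=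
  tau 0%N = T /\
  forall i : nat, (i <= n)%N -> forall u v,
    \sum_(k < i.+1)
      (br (tau k u) (tau (i - k)%N v)
       - tau k (rho (tau (i - k)%N u) v - rho (tau (i - k)%N v) u)) = 0.

Definition extendable (br : g -> g -> g) (rho : g -> V -> V)
    (T : {linear V -> g}) (n : nat) (tau : nat -> {linear V -> g}) : Prop :=
  exists tau' : {linear V -> g},
    is_order_deformation br rho T n.+1
      (fun i => if i == n.+1 then tau' else tau i).

Definition bracketT (rho : g -> V -> V) (T : {linear V -> g}) (u v : V) : V :=
  rho (T u) v - rho (T v) u.

(** Coboundary d_{rhobar} of a 1-cochain f in Hom(V,g) (the formula of the
    paper with k = 1). *)
Definition dbar1 (br : g -> g -> g) (rho : g -> V -> V)
    (T : {linear V -> g}) (f : {linear V -> g}) (u1 u2 : V) : g :=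
  br (T u1) (f u2) - br (T u2) (f u1)
  + T (rho (f u2) u1) - T (rho (f u1) u2)
  - f (bracketT rho T u1 u2).

Definition Ob (br : g -> g -> g) (rho : g -> V -> V) (n : nat)
    (tau : nat -> {linear V -> g}) (u v : V) : g :=
  \sum_(1 <= i < n.+1)
    (br (tau i u) (tau (n.+1 - i)%N v)
     - tau i (rho (tau (n.+1 - i)%N u) v - rho (tau (n.+1 - i)%N v) u)).

Definition Ob_class_trivial (br : g -> g -> g) (rho : g -> V -> V)
    (T : {linear V -> g}) (n : nat) (tau : nat -> {linear V -> g}) : Prop :=
  exists xi : {linear V -> g}, forall u v, Ob br rho n tau u v = dbar1 br rho T xi u v.

End OOps.

(** The order [n+1] equation of [T_t + tau t^(n+1)] is [Ob + d tau = 0], because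
    its only terms involving [tau] are those pairing [tau] with [tau_0 = T], and
    these assemble (using skew-symmetry of the bracket) into the coboundary
    [d tau].  The lower-order equations do not involve [tau].  Hence an extension
    [tau] exists iff [Ob = d (- tau)] for some [tau], i.e. iff [Ob] is exact. *)

From HB Require Import structures.
From mathcomp Require Import all_boot all_order all_algebra.
Set Implicit Arguments. Unset Strict Implicit. Unset Printing Implicit Defensive.
Import GRing.Theory.
Local Open Scope ring_scope.

Lemma linearN_fun (K : pzRingType) (U W : lmodType K) (f : U -> W) :
  linear f -> forall x, f (- x) = - f x.
Proof.
move=> /zmod_morphism_linear fB x.
have f0 : f 0 = 0 by rewrite -(subrr (0 : U)) fB subrr.
by rewrite -sub0r fB f0 sub0r.
Qed.

Section Deformation.
Variables (K : fieldType) (g V : lmodType K).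
Variables (br : g -> g -> g) (rho : g -> V -> V).

Lemma lie_bracket_skew : is_lie_bracket br -> forall x y, br y x = - br x y.
Proof.
case=> brDl brDr brxx _ x y.
have brD1l a b c : br (a + b) c = br a c + br b c.
  by have := brDl 1 a b c; rewrite !scale1r.
have brD1r a b c : br c (a + b) = br c a + br c b.
  by have := brDr 1 a b c; rewrite !scale1r.
have := brxx (x + y); rewrite brD1l !brD1r !brxx add0r addr0 => /eqP.
by rewrite addrC addr_eq0 => /eqP.
Qed.

Lemma dbar1_opp :
  is_lie_bracket br -> is_representation br rho ->
  forall (T f : {linear V -> g}) u v, dbar1 br rho T (\- f) u v = - dbar1 br rho T f u v.
Proof.
case=> _ brDr _ _ [rhoDl _ _] T f u v.
have brN z x : br z (- x) = - br z x.
  by apply: (linearN_fun (f := br z)) => a y y'; apply: brDr.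
have rhoN w x : rho (- x) w = - rho x w.
  by apply: (linearN_fun (f := rho^~ w)) => a y z; apply: rhoDl.
by rewrite /dbar1 /= !brN !rhoN !linearN /= !opprD !opprK.
Qed.

Definition deformation_defect (tau : nat -> {linear V -> g}) (i : nat) (u v : V) : g :=
  \sum_(k < i.+1)
    (br (tau k u) (tau (i - k)%N v)
     - tau k (rho (tau (i - k)%N u) v - rho (tau (i - k)%N v) u)).

Definition extend_deformation (n : nat) (tau : nat -> {linear V -> g})
    (t : {linear V -> g}) : nat -> {linear V -> g} :=
  fun i => if i == n.+1 then t else tau i.

Lemma deformation_defect_extend n tau t i u v : (i <= n)%N ->
  deformation_defect (extend_deformation n tau t) i u v
  = deformation_defect tau i u v.
Proof.
move=> le_in; apply: eq_bigr => k _.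
have ltkn : (k < n.+1)%N by rewrite (leq_trans (ltn_ord k)).
have ltikn : (i - k < n.+1)%N by rewrite ltnS (leq_trans (leq_subr _ _)).
by rewrite /extend_deformation !ltn_eqF.
Qed.

Lemma deformation_defect_extend_top (T : {linear V -> g}) n tau :
  (forall x y, br y x = - br x y) -> tau 0%N = T -> forall t u v,
  deformation_defect (extend_deformation n tau t) n.+1 u v
  = Ob br rho n tau u v + dbar1 br rho T t u v.
Proof.
move=> br_skew tau0 t u v.
rewrite /deformation_defect big_ord_recl big_ord_recr /= /extend_deformation /=.
rewrite subn0 subnn eqxx /= tau0.
set S := \sum_(i < n) _.
have -> : S = Ob br rho n tau u v.
  rewrite /S /Ob big_add1 /= big_mkord; apply: eq_bigr => i _.
  rewrite /bump /= add1n subSS eqSS (ltn_eqF (ltn_ord i)).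
  by rewrite (ltn_eqF (_ : (n - i < n.+1)%N)) // ltnS leq_subr.
rewrite /dbar1 /bracketT (br_skew (T v)) linearB /=.
rewrite addrCA; congr (_ + _); rewrite opprB !addrA; congr (_ - _).
by rewrite addrAC; congr (_ - _); rewrite addrAC.
Qed.

End Deformation.

Theorem theorem5p15 (K : fieldType) (g V : lmodType K)
    (br : g -> g -> g) (rho : g -> V -> V) (T : {linear V -> g})
    (n : nat) (tau : nat -> {linear V -> g}) :
  is_lie_bracket br ->
  is_representation br rho ->
  is_O_operator br rho T ->
  is_order_deformation br rho T n tau ->
  (extendable br rho T n tau <-> Ob_class_trivial br rho T n tau).
Proof.
(* The O-operator identity is the order-0 equation of the deformation. *)
move=> lie repr _ [tau0 defect0].
have top := deformation_defect_extend_top rho n (lie_bracket_skew lie) tau0.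
have dbar1N := dbar1_opp lie repr.
split.
- case=> t [_ defect_ext]; exists (\- t) => u v.
  have := defect_ext n.+1 (leqnn _) u v.
  rewrite -/(deformation_defect br rho (extend_deformation n tau t) n.+1 u v).
  by rewrite top => /eqP; rewrite addr_eq0 dbar1N => /eqP.
- case=> xi Ob_xi; exists (\- xi); split=> // i; rewrite leq_eqVlt.
  case/orP=> [/eqP -> | le_in] u v;
    rewrite -/(deformation_defect br rho (extend_deformation n tau (\- xi)) _ u v).
    by rewrite top dbar1N Ob_xi subrr.
  by rewrite deformation_defect_extend // [LHS]defect0.
Qed.
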